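(* Let $\mathfrak L=\mathbb V\oplus\mathbb W$ be a color gLt-algebra admitting a quasi-multiplicative basis $\mathfrak B=\{e_i\}_{i\in I}$ of $\mathbb W\neq 0$, and let $\phi$ be the associated map defined in the context. Let $J\subset I\,\dot\cup\,\overline I$ with $J=\overline J$, let $X\in\mathfrak I^{\,n-1}\,\dot\cup\,\overline{\mathfrak I}^{\,n-1}$ and $i\in I$. The following are equivalent: (1) $i\in\phi(J,X)$; (2) either $\phi(\{i\},\overline X)\cap J\cap I\neq\emptyset$ or $\phi(\{\overline i\},X)\cap J\cap I\neq\emptyset$.
   Context: Let $\mathbb F$ be a field, $\mathbb G$ an abelian group, $n\ge 2$, and $\epsilon:\mathbb G\times\mathbb G\to\mathbb F\setminus\{0\}$ a bicharacter ($\epsilon(k,g+h)=\epsilon(k,g)\epsilon(k,h)$, $\epsilon(g+h,k)=\epsilon(g,k)\epsilon(h,k)$, $\epsilon(g,h)\epsilon(h,g)=1$). A graded $n$-ary algebra is a $\mathbb G$-graded vector space $\mathfrak L=\bigoplus_{g\in\mathbb G}\mathfrak L_g$ with an $n$-linear map $\langle\cdot,\dots,\cdot\rangle:\mathfrak L^n\to\mathfrak L$ such that $\langle\mathfrak L_{g_1},\dots,\mathfrak L_{g_n}\rangle\subset\mathfrak L_{g_1+\dots+g_n}$. For $\sigma\in\mathbb S_n$ write $\langle x_1,\dots,x_n\rangle_\sigma:=\langle x_{\sigma(1)},\dots,x_{\sigma(n)}\rangle$; for subsets $A_1,\dots,A_n$, $\langle A_1,\dots,A_n\rangle_\sigma$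 denotes the linear span of all $\langle x_1,\dots,x_n\rangle_\sigma$ with $x_r\in A_r$. A color gLt-algebra is a graded $n$-ary algebra satisfying, for each $k=1,\dots,n$ and fixed scalars $\alpha^{\sigma_1,\sigma_2}_{i,j,k}\in\mathbb F$, the color version (each term on the right multiplied by the product of values of $\epsilon$ on the degrees of the homogeneous arguments transposed in passing from the left-hand order to the order of that term) of the identity $\langle y_1,\dots,y_{k-1},\langle x_1,\dots,x_n\rangle,y_k,\dots,y_{n-1}\rangle=\sum_{1\le i,j\le n,\,\sigma_1\in\mathbb S_n,\,\sigma_2\in\mathbb S_{n-1}}\alpha^{\sigma_1,\sigma_2}_{i,j,k}\langle x_{\sigma_1(1)},\dots,x_{\sigma_1(i-1)},\langle y_{\sigma_2(1)},\dots,y_{\sigma_2(j-1)},x_{\sigma_1(i)},y_{\sigma_2(j)},\dots,y_{\sigma_2(n-1)}\rangle,x_{\sigma_1(i+1)},\dots,x_{\sigma_1(n)}\rangle$. $\mathfrak L$ admits a quasi-multiplicative basis if $\mathfrak L=\mathbb V\oplus\mathbb W$ with $\mathbb V$, $\mathbb W\ne0$ graded subspaces and $\mathfrak B=\{e_i\}_{i\in I}$ a basis of homogeneous elements of $\mathbb W$ such that: (1) for $i_1,\dots,i_n\in I$, either $\langle e_{i_1},\dots,e_{i_n}\rangle\in\mathbb Fe_j$ for some $j\in I$ or $\langle e_{i_1},\dots,e_{i_n}\rangle\in\mathbb V$; (2) for $0<k<n$, $i_1,\dots,i_k\in I$ and $\sigma\in\mathbb S_n$, $\langle e_{i_1},\dots,e_{i_k},\mathbb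 V,\dots,\mathbb V\rangle_\sigma\subset\mathbb Fe_{j_\sigma}$ for some $j_\sigma\in I$; (3) either $\langle\mathbb V,\dots,\mathbb V\rangle\subset\mathbb Fe_j$ for some $j\in I$ or $\langle\mathbb V,\dots,\mathbb V\rangle\subset\mathbb V$. Index maps: let $v$ be a symbol not in $I$, $\mathfrak I:=I\,\dot\cup\,\{v\}$; for each $j\in\mathfrak I$ take a new symbol $\overline j$, $\overline I:=\{\overline i:i\in I\}$, $\overline{\mathfrak I}:=\overline I\,\dot\cup\,\{\overline v\}$; set $\overline{(\overline j)}:=j$, $\overline J:=\{\overline j:j\in J\}$ for a set $J$ of symbols ($\overline\emptyset=\emptyset$), and $\overline X:=(\overline a_2,\dots,\overline a_n)$ for a tuple $X=(a_2,\dots,a_n)$. Put $u_j:=e_j$ for $j\in I$ and $u_v:=\mathbb V$. For $\sigma\in\mathbb S_n$ and $(j_1,\dots,j_n)\in\mathfrak I^n$ let $a_\sigma(j_1,\dots,j_n)=\{r\}$ if $r\in I$ and $0\ne\langle u_{j_1},\dots,u_{j_n}\rangle_\sigma\subset\mathbb Fe_r$, $=\{v\}$ if $0\ne\langle u_{j_1},\dots,u_{j_n}\rangle_\sigma\subset\mathbb V$, and $=\emptyset$ otherwise. For $j,j_2,\dots,j_n\in\mathfrak I$ let $b_\sigma(j,\overline j_2,\dots,\overline j_n):=\{x\in\mathfrak I: a_\sigma(x,j_2,\dots,j_n)=\{j\}\}$. Define $\mu$ on $(\mathfrak I\,\dot\cup\,\overline{\mathfrak I})\times(\mathfrak I^{n-1}\,\dot\cup\,\overline{\mathfrak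 I}^{n-1})$ with values subsets of $\mathfrak I$ by: $\mu(j,j_1,\dots,j_{n-1})=\bigcup_{\sigma\in\mathbb S_n}a_\sigma(j,j_1,\dots,j_{n-1})$ for $j,j_1,\dots,j_{n-1}\in\mathfrak I$; $\mu(j,\overline j_1,\dots,\overline j_{n-1})=\bigcup_{\sigma\in\mathbb S_n}b_\sigma(j,\overline j_1,\dots,\overline j_{n-1})$ for $j,j_1,\dots,j_{n-1}\in\mathfrak I$; $\mu(\overline j,j_1,\dots,j_{n-1})=\bigcup_{1\le k\le n-1,\ \sigma\in\mathbb S_n}b_\sigma(j_k,\overline j,\overline j_1,\dots,\overline j_{k-1},\overline j_{k+1},\dots,\overline j_{n-1})$ for $j,j_1,\dots,j_{n-1}\in\mathfrak I$; and $\mu(\overline j,\overline j_1,\dots,\overline j_{n-1})=\emptyset$. Define $\phi$ on pairs $(J,X)$ with $J\subset I\,\dot\cup\,\overline I$ and $X\in\mathfrak I^{n-1}\,\dot\cup\,\overline{\mathfrak I}^{n-1}$ by $\phi(\emptyset,X)=\emptyset$ and, for $J\ne\emptyset$, $\phi(J,X):=K\cup\overline K$ where $K:=\big(\bigcup_{j\in J}\mu(j,X)\big)\setminus\{v\}$. *)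

From HB Require Import structures.
From mathcomp Require Import all_boot all_order all_algebra all_fingroup.
From mathcomp Require Export boolp classical_sets.
Set Implicit Arguments. Unset Strict Implicit. Unset Printing Implicit Defensive.
Import GRing.Theory.
Local Open Scope ring_scope.
Local Open Scope classical_set_scope.

Definition is_subspace (F : fieldType) (L : lmodType F) (S : set L) : Prop :=
  S 0 /\ forall (a : F) (x y : L), S x -> S y -> S (a *: x + y).

Definition lspan (F : fieldType) (L : lmodType F) (A : set L) : set L :=
  [set z | exists (m : nat) (c : 'I_m -> F) (w : 'I_m -> L),
      (forall t, A (w t)) /\ z = \sum_(t < m) c t *: w t].

Definition line (F : fieldType) (L : lmodType F) (x : L) : set L :=
  [set c *: x | c in [set: F]].

Definition lin_indep (F : fieldType) (L : lmodType F) (I : eqType) (e : I -> L) :=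
  forall (s : seq I) (c : I -> F), uniq s ->
    \sum_(i <- s) c i *: e i = 0 -> forall i, i \in s -> c i = 0.

Definition is_basis_of (F : fieldType) (L : lmodType F) (I : eqType)
  (e : I -> L) (W : set L) :=
  lin_indep e /\ W = lspan (range e).

Definition homogeneous_decomp (F : fieldType) (G : zmodType) (L : lmodType F)
  (Lg : G -> set L) (S : set L) (x : L) :=
  exists (s : seq G) (c : G -> L), uniq s /\
    (forall g, g \in s -> Lg g (c g) /\ S (c g)) /\ x = \sum_(g <- s) c g.

Definition graded_space (F : fieldType) (G : zmodType) (L : lmodType F)
  (Lg : G -> set L) :=
  (forall g, is_subspace (Lg g)) /\
  (forall x, homogeneous_decomp Lg setT x) /\
  (forall (s : seq G) (c : G -> L), uniq s -> (forall g, g \in s -> Lg g (c g)) ->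
     \sum_(g <- s) c g = 0 -> forall g, g \in s -> c g = 0).

Definition graded_subspace (F : fieldType) (G : zmodType) (L : lmodType F)
  (Lg : G -> set L) (S : set L) :=
  is_subspace S /\ forall x, S x -> homogeneous_decomp Lg S x.

Definition bicharacter (F : fieldType) (G : zmodType) (eps : G -> G -> F) :=
  (forall g h, eps g h != 0) /\
  (forall k g h, eps k (g + h) = eps k g * eps k h) /\
  (forall g h k, eps (g + h) k = eps g k * eps h k) /\
  (forall g h, eps g h * eps h g = 1).

Definition upd (n : nat) (T : Type) (f : {ffun 'I_n -> T}) (k : 'I_n) (x : T) :
  {ffun 'I_n -> T} := [ffun p => if p == k then x else f p].

Definition multilinear (F : fieldType) (L : lmodType F) (n : nat)
  (mult : {ffun 'I_n -> L} -> L) :=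
  forall (f : {ffun 'I_n -> L}) (k : 'I_n) (a : F) (x y : L),
    mult (upd f k (a *: x + y)) = a *: mult (upd f k x) + mult (upd f k y).

Definition graded_nary (F : fieldType) (G : zmodType) (L : lmodType F) (n : nat)
  (Lg : G -> set L) (mult : {ffun 'I_n -> L} -> L) :=
  graded_space Lg /\ multilinear mult /\
  forall (f : {ffun 'I_n -> L}) (g : 'I_n -> G),
    (forall p, Lg (g p) (f p)) -> Lg (\sum_(p < n) g p) (mult f).

(* a permutation of 'I_m applied to a natural number (identity outside [0,m)) *)
Definition papp (m : nat) (s : {perm 'I_m}) (p : nat) : nat :=
  match (insub p : option 'I_m) with Some o => nat_of_ord (s o) | None => p end.

Definition insert_at (T : Type) (k : nat) (z : T) (y : nat -> T) : nat -> T :=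
  fun p => if (p < k)%N then y p else if p == k then z else y p.-1.

Definition color_sign (F : fieldType) (G : zmodType) (eps : G -> G -> F)
  (T : eqType) (deg : T -> G) (s t : seq T) : F :=
  \prod_(a <- s) \prod_(b <- s | (index a s < index b s)%N && (index b t < index a t)%N)
     eps (deg a) (deg b).

(* labels: inl q = x_q, inr s = y_s (0-based) *)
Definition lhs_order (n k : nat) : seq (nat + nat) :=
  [seq @inr nat nat s | s <- iota 0 k] ++ [seq @inl nat nat q | q <- iota 0 n] ++
  [seq @inr nat nat s | s <- iota k (n.-1 - k)].

Definition rhs_order (n i j : nat) (s1 : 'S_n) (s2 : {perm 'I_n.-1}) : seq (nat + nat) :=
  [seq @inl nat nat (papp s1 q) | q <- iota 0 i] ++
  [seq @inr nat nat (papp s2 s) | s <- iota 0 j] ++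
  [:: @inl nat nat (papp s1 i)] ++
  [seq @inr nat nat (papp s2 s) | s <- iota j (n.-1 - j)] ++
  [seq @inl nat nat (papp s1 q) | q <- iota i.+1 (n - i.+1)].

(* < y_0, ..., y_{k-1}, <x_0, ..., x_{n-1}>, y_k, ..., y_{n-2} > *)
Definition lhs_term (L : Type) (n : nat) (mult : {ffun 'I_n -> L} -> L) (k : nat)
  (x y : nat -> L) : L :=
  mult [ffun p : 'I_n => insert_at k (mult [ffun q : 'I_n => x (nat_of_ord q)]) y p].

(* < x_{s1 0}, .., x_{s1 (i-1)}, < y_{s2 0}, .., y_{s2 (j-1)}, x_{s1 i},
      y_{s2 j}, .. >, x_{s1 (i+1)}, .. > *)
Definition rhs_term (L : Type) (n : nat) (mult : {ffun 'I_n -> L} -> L)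
  (i j : 'I_n) (s1 : 'S_n) (s2 : {perm 'I_n.-1}) (x y : nat -> L) : L :=
  mult [ffun p : 'I_n => if p == i then
          mult [ffun q : 'I_n =>
                  insert_at j (x (papp s1 i)) (fun s => y (papp s2 s)) q]
        else x (papp s1 p)].

Definition color_gLt (F : fieldType) (G : zmodType) (eps : G -> G -> F) (n : nat)
  (L : lmodType F) (Lg : G -> set L) (mult : {ffun 'I_n -> L} -> L) :=
  graded_nary Lg mult /\
  exists alpha : 'I_n -> 'I_n -> 'I_n -> 'S_n -> {perm 'I_n.-1} -> F,
  forall (k : 'I_n) (x y : nat -> L) (gx gy : nat -> G),
    (forall q, (q < n)%N -> Lg (gx q) (x q)) ->
    (forall s, (s < n.-1)%N -> Lg (gy s) (y s)) ->
    lhs_term mult k x y =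
      \sum_(i < n) \sum_(j < n) \sum_(s1 : 'S_n) \sum_(s2 : {perm 'I_n.-1})
        (alpha i j k s1 s2 *
         color_sign eps (fun l => match l with inl q => gx q | inr s => gy s end)
                    (lhs_order n k) (rhs_order i j s1 s2))
        *: rhs_term mult i j s1 s2 x y.

Definition prod_span (F : fieldType) (L : lmodType F) (n : nat)
  (mult : {ffun 'I_n -> L} -> L) (A : 'I_n -> set L) (s : 'S_n) : set L :=
  lspan [set mult [ffun p => x (s p)] | x in [set x : 'I_n -> L | forall r, A r (x r)]].

Definition quasi_mult_basis (F : fieldType) (G : zmodType) (L : lmodType F)
  (n : nat) (Lg : G -> set L) (mult : {ffun 'I_n -> L} -> L)
  (V W : set L) (I : eqType) (e : I -> L) :=
  [/\ graded_subspace Lg V /\ graded_subspace Lg W,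
      V <> [set 0] /\ W <> [set 0],
      (forall x, exists v w, V v /\ W w /\ x = v + w) /\
      (forall x, V x -> W x -> x = 0),
      is_basis_of e W /\ (forall i, exists g, Lg g (e i)) &
      [/\
        (forall ids : 'I_n -> I,
           (exists j, line (e j) (mult [ffun p => e (ids p)])) \/
           V (mult [ffun p => e (ids p)])),
        (forall k : nat, (0 < k < n)%N -> forall (ids : 'I_n -> I) (s : 'S_n),
           exists j, prod_span mult
             (fun r : 'I_n => if (r < k)%N then [set e (ids r)] else V) s
             `<=` line (e j)) &
        (exists j, prod_span mult (fun _ => V) 1%g `<=` line (e j)) \/
        prod_span mult (fun _ => V) 1%g `<=` V]].

Inductive bsym (A : Type) := Unb of A | Bar of A.
Arguments Unb {A}. Arguments Bar {A}.

Definition bbar (A : Type) (x : bsym A) : bsym A :=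
  match x with Unb a => Bar a | Bar a => Unb a end.

Definition bmap (A B : Type) (f : A -> B) (x : bsym A) : bsym B :=
  match x with Unb a => Unb (f a) | Bar a => Bar (f a) end.

(* \mathfrak I = I \dot\cup {v}, modelled as option I with None = v;
   u_j = e_j (as the singleton {e_j}) and u_v = V *)
Definition u_of (L : Type) (I : Type) (V : set L) (e : I -> L) (j : option I) : set L :=
  match j with Some i => [set e i] | None => V end.

Definition a_sig (F : fieldType) (L : lmodType F) (n : nat)
  (mult : {ffun 'I_n -> L} -> L) (V : set L) (I : eqType) (e : I -> L)
  (s : 'S_n) (js : seq (option I)) : set (option I) :=
  [set r | prod_span mult (fun p : 'I_n => u_of V e (nth None js p)) s <> [set 0] /\
           prod_span mult (fun p : 'I_n => u_of V e (nth None js p)) s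
             `<=` match r with Some r' => line (e r') | None => V end].

Definition b_sig (F : fieldType) (L : lmodType F) (n : nat)
  (mult : {ffun 'I_n -> L} -> L) (V : set L) (I : eqType) (e : I -> L)
  (s : 'S_n) (j : option I) (rest : seq (option I)) : set (option I) :=
  [set x | a_sig mult V e s (x :: rest) = [set j]].

Definition mu (F : fieldType) (L : lmodType F) (n : nat)
  (mult : {ffun 'I_n -> L} -> L) (V : set L) (I : eqType) (e : I -> L)
  (j : bsym (option I)) (X : bsym ((n.-1).-tuple (option I))) : set (option I) :=
  match j, X with
  | Unb j, Unb js => [set x | exists s : 'S_n, a_sig mult V e s (j :: js) x]
  | Unb j, Bar js => [set x | exists s : 'S_n, b_sig mult V e s j js x]
  | Bar j, Unb js => [set x | exists (k : 'I_n.-1) (s : 'S_n),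
                       b_sig mult V e s (tnth js k) (j :: (take k js ++ drop k.+1 js)) x]
  | Bar _, Bar _ => set0
  end.

(* phi(J, X) = K \cup \bar K, K = (\bigcup_{j in J} mu(j, X)) \ {v} *)
Definition phi (F : fieldType) (L : lmodType F) (n : nat)
  (mult : {ffun 'I_n -> L} -> L) (V : set L) (I : eqType) (e : I -> L)
  (J : set (bsym I)) (X : bsym ((n.-1).-tuple (option I))) : set (bsym I) :=
  let K := [set i : I | exists j, J j /\ mu mult V e (bmap Some j) X (Some i)] in
  [set y | match y with Unb i => K i | Bar i => K i end].
Arguments bbar {A}. Arguments bmap {A B}.

From HB Require Import structures.
From mathcomp Require Import all_boot all_order all_algebra all_fingroup.
From mathcomp Require Import boolp classical_sets.
Set Implicit Arguments. Unset Strict Implicit. Unset Printing Implicit Defensive.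
Local Open Scope ring_scope.
Local Open Scope classical_set_scope.
Import GRing.Theory.

(* Since the lines F e_j (j in I) and V pairwise meet only in 0, each a_sigma
   has at most one element. Hence b_sigma(j, X) is the set of x with j in
   a_sigma(x, X), which makes mu(j, X) at x the same as mu(x, \bar X) at j;
   and a transposition of the arguments, absorbed into sigma, shows that
   mu(\bar j, X) at x is the same as mu(\bar x, X) at j. Condition (1)
   unfolds to a union over j in J of mu(j, X) at i, and these two
   symmetries, together with J = \bar J, turn it into condition (2). *)

Lemma neq_set0P (T : Type) (A : set T) : A <> set0 <-> exists x, A x.
Proof.
split=> [A_neq0|[x Ax] A0]; last by rewrite A0 in Ax.
by apply: contrapT => noA; apply/A_neq0/nonemptyPn.
Qed.

Lemma bbarK (A : Type) : involutive (@bbar A).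
Proof. by case. Qed.

Lemma bar_closed_Unb (A : Type) (J : set (bsym A)) (k : A) :
  J = bbar @` J -> J (Unb k) <-> J (Bar k).
Proof. by move=> J_bar; split=> Jk; rewrite J_bar; [exists (Unb k)|exists (Bar k)]. Qed.

Lemma nth_tperm01 (T : Type) (d a b : T) (rest : seq T) (n : nat) (i0 i1 p : 'I_n) :
  i0 = 0%N :> nat -> i1 = 1%N :> nat ->
  nth d [:: a, b & rest] (tperm i0 i1 p) = nth d [:: b, a & rest] p.
Proof.
move=> i0_0 i1_1; case: tpermP => [->|->|p_i0 p_i1]; rewrite ?i0_0 ?i1_1 //.
case: p p_i0 p_i1 => -[|[|p]] lt_p //= p_i0 p_i1.
- by case: p_i0; apply: val_inj; rewrite /= i0_0.
- by case: p_i1; apply: val_inj; rewrite /= i1_1.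
Qed.

Section LinearAlgebra.

Variables (F : fieldType) (L : lmodType F).

Lemma lspan0 (A : set L) : lspan A 0.
Proof. by exists 0%N, (fun=> 0), (fun=> 0); split=> [[]|]; rewrite ?big_ord0. Qed.

Lemma lspan_neq0 (A : set L) : lspan A <> [set 0] -> exists2 z, lspan A z & z != 0.
Proof.
move=> span_neq0; apply: contrapT => span0; apply/span_neq0/seteqP.
split=> [z Az|z ->]; last exact: lspan0.
by have [->//|z_neq0] := eqVneq z 0; case: span0; exists z.
Qed.

Lemma line_sub_lspan (A : set L) (x : L) : A x -> line x `<=` lspan A.
Proof. by move=> Ax _ [c _ <-]; exists 1%N, (fun=> c), (fun=> x); rewrite big_ord1. Qed.

Lemma line_indep_inj (I : eqType) (e : I -> L) (a b : I) (z : L) :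
  lin_indep e -> z != 0 -> line (e a) z -> line (e b) z -> a = b.
Proof.
move=> e_indep z_neq0 [c _ cz] [d _ dz]; apply: contrapT => /eqP a_neq_b.
have uniq_ab : uniq [:: a; b] by rewrite /= inE a_neq_b.
have sum0 : \sum_(x <- [:: a; b]) (if x == a then c else - d) *: e x = 0.
  by rewrite big_cons big_seq1 eqxx eq_sym (negbTE a_neq_b) scaleNr cz dz subrr.
have /(_ (mem_head _ _)) := e_indep _ _ uniq_ab sum0 a.
by rewrite eqxx => c0; move: z_neq0; rewrite -cz c0 scale0r eqxx.
Qed.

End LinearAlgebra.

Lemma prod_span_reindex (F : fieldType) (L : lmodType F) (n : nat)
    (mult : {ffun 'I_n -> L} -> L) (A : 'I_n -> set L) (s t : 'S_n) :
  prod_span mult A s = prod_span mult (A \o t) (s * t^-1)%g.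
Proof.
rewrite /prod_span; congr lspan; apply/seteqP; split=> _ [x Ax <-].
- exists (x \o t) => [r|]; first exact: Ax.
  by congr mult; apply/ffunP => p; rewrite !ffunE /= permM permKV.
- exists (x \o t^-1%g) => [r|]; first by have := Ax (t^-1%g r); rewrite /= permKV.
  by congr mult; apply/ffunP => p; rewrite !ffunE /= permM.
Qed.

Section IndexMaps.

Variables (F : fieldType) (L : lmodType F) (n : nat) (mult : {ffun 'I_n -> L} -> L).
Variables (V : set L) (I : eqType) (e : I -> L).
Hypothesis e_indep : lin_indep e.
Hypothesis V_span0 : forall x, V x -> lspan (range e) x -> x = 0.

Local Notation a_sig := (a_sig mult V e).
Local Notation mu := (mu mult V e).

Definition target (r : option I) : set L :=
  match r with Some j => line (e j) | None => V end.

Lemma target_inj (r1 r2 : option I) (z : L) :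
  z != 0 -> target r1 z -> target r2 z -> r1 = r2.
Proof.
have V_line0 j : V z -> line (e j) z -> z = 0.
  by move=> Vz /(line_sub_lspan (imageT e j)); apply: V_span0.
move=> z_neq0; case: r1 => [a|] /= z1; case: r2 => [b|] //= z2.
- by rewrite (line_indep_inj e_indep z_neq0 z1 z2).
- by move: z_neq0; rewrite (V_line0 a z2 z1) eqxx.
- by move: z_neq0; rewrite (V_line0 b z1 z2) eqxx.
Qed.

Lemma a_sig_uniq (s : 'S_n) (js : seq (option I)) (r1 r2 : option I) :
  a_sig s js r1 -> a_sig s js r2 -> r1 = r2.
Proof.
move=> [span_neq0 sub1] [_ sub2].
have [z span_z z_neq0] := lspan_neq0 span_neq0.
exact: target_inj z_neq0 (sub1 z span_z) (sub2 z span_z).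
Qed.

Lemma b_sigE (s : 'S_n) (j x : option I) (rest : seq (option I)) :
  b_sig mult V e s j rest x <-> a_sig s (x :: rest) j.
Proof.
rewrite /b_sig; split=> [->//|a_j].
by apply/seteqP; split=> [r /(a_sig_uniq a_j) ->|r ->].
Qed.

Lemma mu_Unb_swap (a b : option I) (X : bsym ((n.-1).-tuple (option I))) :
  mu (Unb a) X b <-> mu (Unb b) (bbar X) a.
Proof. by case: X => js; split=> -[s ab]; exists s; apply/b_sigE. Qed.

Hypothesis n_gt1 : (1 < n)%N.

Definition swap01 : 'S_n := tperm (Ordinal (ltnW n_gt1)) (Ordinal n_gt1).

Lemma swap01V : swap01^-1%g = swap01.
Proof. exact: tpermV. Qed.

Lemma a_sig_swap (s : 'S_n) (a b : option I) (rest : seq (option I)) :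
  a_sig s [:: a, b & rest] = a_sig (s * swap01)%g [:: b, a & rest].
Proof.
rewrite /a_sig.
have -> : (fun p : 'I_n => u_of V e (nth None [:: b, a & rest] p)) =
          (fun p : 'I_n => u_of V e (nth None [:: a, b & rest] p)) \o swap01.
  by apply: funext => p /=; rewrite nth_tperm01.
by rewrite (prod_span_reindex _ _ _ swap01) swap01V.
Qed.

Lemma mu_Bar_swap (a b : option I) (X : bsym ((n.-1).-tuple (option I))) :
  mu (Bar a) X b <-> mu (Bar b) X a.
Proof.
case: X => js //=; split=> -[k [s /b_sigE a_k]];
  by exists k, (s * swap01)%g; apply/b_sigE; rewrite -a_sig_swap.
Qed.

End IndexMaps.

Lemma meet_range_Unb_neq0 (A : Type) (P J : set (bsym A)) :
  P `&` J `&` range Unb <> set0 <-> exists k, J (Unb k) /\ P (Unb k).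
Proof.
rewrite neq_set0P; split=> [[x [[Px Jx] [k _ kx]]]|[k [Jk Pk]]].
  by exists k; rewrite kx.
by exists (Unb k); split; [split|exists k].
Qed.

Lemma phi1_UnbE (F : fieldType) (L : lmodType F) (n : nat)
    (mult : {ffun 'I_n -> L} -> L) (V : set L) (I : eqType) (e : I -> L)
    (j : bsym I) (X : bsym ((n.-1).-tuple (option I))) (i : I) :
  phi mult V e [set j] X (Unb i) <-> mu mult V e (bmap Some j) X (Some i).
Proof. by split=> [[_ [-> mu_i]]|mu_i]; last by exists j. Qed.

Theorem lemma3p3 (F : fieldType) (G : zmodType) (eps : G -> G -> F) (n : nat)
  (L : lmodType F) (Lg : G -> set L) (mult : {ffun 'I_n -> L} -> L)
  (V W : set L) (I : eqType) (e : I -> L) :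
  (2 <= n)%N -> bicharacter eps -> color_gLt eps Lg mult ->
  quasi_mult_basis Lg mult V W e ->
  forall (J : set (bsym I)) (X : bsym ((n.-1).-tuple (option I))) (i : I),
    J = bbar @` J ->
    (phi mult V e J X (Unb i) <->
     ((phi mult V e [set Unb i] (bbar X) `&` J `&` range Unb) <> set0 \/
      (phi mult V e [set Bar i] X `&` J `&` range Unb) <> set0)).
Proof.
move=> n_gt1 _ _ [_ _ [_ VW] [[e_indep W_span] _] _] J X i J_bar.
have V_span0 x : V x -> lspan (range e) x -> x = 0 by rewrite -W_span; apply: VW.
have JUB := bar_closed_Unb _ J_bar.
have Unb_swap := mu_Unb_swap mult e_indep V_span0.
have Bar_swap := mu_Bar_swap mult e_indep V_span0 n_gt1.
rewrite !meet_range_Unb_neq0; split.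
- case=> -[k|k] [Jk mu_ki].
  + by left; exists k; split=> //; apply/phi1_UnbE/Unb_swap; rewrite bbarK.
  + by right; exists k; split; [apply/JUB|apply/phi1_UnbE/Bar_swap].
- case=> -[k [Jk /phi1_UnbE mu_ik]].
  + by exists (Unb k); split=> //; apply/Unb_swap.
  + by exists (Bar k); split; [apply/JUB|apply/Bar_swap].
Qed.
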